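(* Let $n\in\mathbb N$ and $F\colon\mathbb R_+^n\to\mathbb R_+$. If $F\in P^n_B$, then for all $K_1,\dots,K_n\geqslant1$ there exists $K\geqslant1$ such that $F\in P_{(B_{K_1},\dots,B_{K_n})-B_K}$.
   Context: $\mathbb R_+=[0,\infty)$. A semimetric on $X$ is $d\colon X^2\to\mathbb R_+$ with $d(x,y)=0\iff x=y$ and $d(x,y)=d(y,x)$. For $K\geqslant1$, a b-metric with relaxation constant $K$ (condition $B_K$) is a semimetric with $d(x,z)\leqslant K(d(x,y)+d(y,z))$ for all $x,y,z$; a b-metric is a semimetric satisfying $B_K$ for some $K\geqslant1$. For spaces $(X_i,d_i)$ and $F\colon\mathbb R_+^n\to\mathbb R_+$, define $D$ on $\mathbf X=\prod_{i=1}^nX_i$ by $D(\mathbf x,\mathbf y)=F(d_1(x_1,y_1),\dots,d_n(x_n,y_n))$. $P_{(B_{K_1},\dots,B_{K_n})-B_K}$ is the set of $F$ such that for every collection of semimetric spaces $(X_i,d_i)$ with $d_i$ satisfying $B_{K_i}$, $D$ satisfies $B_K$. $P^n_B$ is the set of $F$ such that for every collection of b-metric spaces $(X_i,d_i)$, $i=1,\dots,n$ (with arbitrary relaxation constants), $D$ is a b-metric on $\mathbf X$. *)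

From mathcomp Require Import ssreflect ssrbool eqtype ssrnat fintype.
From Stdlib Require Import Reals.
Open Scope R_scope.

Definition semimetric (X : Type) (d : X -> X -> R) : Prop :=
  (forall x y, 0 <= d x y) /\
  (forall x y, d x y = 0 <-> x = y) /\
  (forall x y, d x y = d y x).

Definition relaxed_tri (K : R) (X : Type) (d : X -> X -> R) : Prop :=
  forall x y z, d x z <= K * (d x y + d y z).

Definition condB (K : R) (X : Type) (d : X -> X -> R) : Prop :=
  semimetric X d /\ relaxed_tri K X d.

Definition bmetric (X : Type) (d : X -> X -> R) : Prop :=
  semimetric X d /\ exists K, 1 <= K /\ relaxed_tri K X d.

Definition prodD (n : nat) (F : ('I_n -> R) -> R) (X : 'I_n -> Type)
  (d : forall i, X i -> X i -> R) : (forall i, X i) -> (forall i, X i) -> R :=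
  fun x y => F (fun i => d i (x i) (y i)).

Definition P_BKs_BK (n : nat) (F : ('I_n -> R) -> R) (Ks : 'I_n -> R) (K : R) : Prop :=
  forall (X : 'I_n -> Type) (d : forall i, X i -> X i -> R),
    (forall i, condB (Ks i) (X i) (d i)) ->
    condB K (forall i, X i) (prodD n F X d).

Definition P_B (n : nat) (F : ('I_n -> R) -> R) : Prop :=
  forall (X : 'I_n -> Type) (d : forall i, X i -> X i -> R),
    (forall i, bmetric (X i) (d i)) ->
    bmetric (forall i, X i) (prodD n F X d).

From mathcomp Require Import ssreflect ssrfun ssrbool eqtype ssrnat fintype.
From Stdlib Require Import Reals Lra Psatz FunctionalExtensionality ClassicalDescription.
Open Scope R_scope.
Set Implicit Arguments.
Unset Strict Implicit.

(* The constant provided by P^n_B depends on the family of spaces, so we apply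
   it once to a universal family: the i-th space is a disjoint union of all
   triangles allowed by B_{K_i}, with distinct triangles placed far apart; it
   still satisfies B_{K_i}.  The relaxed triangle inequality involves only
   three points, and every triangle of a product of B_{K_i}-spaces is realized
   isometrically, coordinatewise, in the product of the universal spaces, so
   the constant obtained there works for every product.  Applying P^n_B to
   copies of R shows that F vanishes exactly at 0, which gives the semimetric
   axioms. *)

Lemma condB_bmetric (K : R) (X : Type) (d : X -> X -> R) :
  1 <= K -> condB K X d -> bmetric X d.
Proof. by move=> K_ge1 [d_semi d_tri]; split=> //; exists K. Qed.

Lemma Rdist_condB : condB 1 R (fun s t => Rabs (s - t)).
Proof.
split; [split; [|split]|].
- by move=> s t; apply: Rabs_pos.
- move=> s t; split=> [|->]; last by rewrite Rminus_diag Rabs_R0.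
  by rewrite /Rabs; case: Rcase_abs; lra.
- by move=> s t; apply: Rabs_minus_sym.
- move=> s t u; have := Rabs_triang (s - t) (t - u).
  have -> : s - t + (t - u) = s - u by ring.
  lra.
Qed.

Lemma P_B_eq0 (n : nat) (F : ('I_n -> R) -> R) : P_B n F ->
  forall v : 'I_n -> R, (forall i, 0 <= v i) -> F v = 0 <-> v = (fun _ => 0).
Proof.
move=> HPB v v_ge0.
have [[_ [D_eq0 _]] _] :=
  HPB (fun _ => R) (fun _ s t => Rabs (s - t)) (fun=> condB_bmetric (Rle_refl 1) Rdist_condB).
have Dv : (fun i => Rabs (v i - 0)) = v.
  by apply: functional_extensionality => i; rewrite Rminus_0_r Rabs_pos_eq.
by have := D_eq0 v (fun _ => 0); rewrite /prodD Dv.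
Qed.

Lemma prodD_semimetric (n : nat) (F : ('I_n -> R) -> R) (X : 'I_n -> Type)
    (d : forall i, X i -> X i -> R) :
  (forall v, (forall i, 0 <= v i) -> 0 <= F v) ->
  (forall v, (forall i, 0 <= v i) -> F v = 0 <-> v = (fun _ => 0)) ->
  (forall i, semimetric (X i) (d i)) ->
  semimetric (forall i, X i) (prodD n F X d).
Proof.
move=> F_ge0 F_eq0 d_semi; rewrite /prodD.
have d_ge0 x y i : 0 <= d i (x i) (y i) by case: (d_semi i).
have d_eq0 i a b : d i a b = 0 <-> a = b by case: (d_semi i) => _ [].
split; [|split].
- by move=> x y; apply: F_ge0 => i; apply: d_ge0.
- move=> x y; rewrite F_eq0 //; split=> [dxy0 | ->].
  + apply: functional_extensionality_dep => i.
    by apply/d_eq0; apply: (f_equal (fun f => f i) dxy0).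
  + by apply: functional_extensionality => i; apply/d_eq0.
- move=> x y; f_equal; apply: functional_extensionality => i.
  by case: (d_semi i) => _ [_ ->].
Qed.

Lemma prodD_relaxed_tri_transfer (n : nat) (F : ('I_n -> R) -> R)
    (X Y : 'I_n -> Type) (d : forall i, X i -> X i -> R)
    (e : forall i, Y i -> Y i -> R) (K : R) :
  (forall x y z : forall i, X i, exists p q r : forall i, Y i, forall i,
     [/\ e i (p i) (q i) = d i (x i) (y i), e i (q i) (r i) = d i (y i) (z i)
       & e i (p i) (r i) = d i (x i) (z i)]) ->
  relaxed_tri K (forall i, Y i) (prodD n F Y e) ->
  relaxed_tri K (forall i, X i) (prodD n F X d).
Proof.
move=> realize e_tri x y z; have [p [q [r pqr]]] := realize x y z.
have := e_tri p q r; rewrite /prodD.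
have -> : (fun i => e i (p i) (q i)) = (fun i => d i (x i) (y i)).
  by apply: functional_extensionality => i; case: (pqr i).
have -> : (fun i => e i (q i) (r i)) = (fun i => d i (y i) (z i)).
  by apply: functional_extensionality => i; case: (pqr i).
have -> // : (fun i => e i (p i) (r i)) = (fun i => d i (x i) (z i)).
by apply: functional_extensionality => i; case: (pqr i).
Qed.

Section Glue.

Variables (S P : Type) (dom : S -> P -> Prop) (d : S -> P -> P -> R) (M : S -> R) (K : R).
Hypothesis K_ge1 : 1 <= K.
Hypothesis M_gt0 : forall s, 0 < M s.
Hypothesis d_ge0 : forall s p q, dom s p -> dom s q -> 0 <= d s p q.
Hypothesis d_le_M : forall s p q, dom s p -> dom s q -> d s p q <= M s.
Hypothesis d_refl : forall s p, dom s p -> d s p p = 0.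
Hypothesis d_eq0 : forall s p q, dom s p -> dom s q -> d s p q = 0 -> p = q.
Hypothesis d_sym : forall s p q, dom s p -> dom s q -> d s p q = d s q p.
Hypothesis d_relaxed : forall s p q r, dom s p -> dom s q -> dom s r ->
  d s p r <= K * (d s p q + d s q r).

Definition linked (u v : S * P) : Prop := [/\ u.1 = v.1, dom u.1 u.2 & dom v.1 v.2].

(* Points outside [dom] are isolated junk points, kept only so that the
   carrier is the plain product [S * P]. *)
Definition glue_dist (u v : S * P) : R :=
  if excluded_middle_informative (linked u v) then d u.1 u.2 v.2
  else if excluded_middle_informative (u = v) then 0 else M u.1 + M v.1.

Lemma linked_sym u v : linked u v -> linked v u.
Proof. by case=> e du dv; split. Qed.

Lemma linked_trans u v w : linked u v -> linked v w -> linked u w.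
Proof. by case=> e1 du _ [e2 _ dw]; split=> //; rewrite e1. Qed.

Lemma glue_dist_linked u v : linked u v -> glue_dist u v = d u.1 u.2 v.2.
Proof. by rewrite /glue_dist; case: excluded_middle_informative. Qed.

Lemma glue_dist_far u v : ~ linked u v -> u <> v -> glue_dist u v = M u.1 + M v.1.
Proof.
by rewrite /glue_dist => nl nuv; do 2 case: excluded_middle_informative => //.
Qed.

Lemma glue_dist_self u : glue_dist u u = 0.
Proof.
rewrite /glue_dist; case: excluded_middle_informative => /= [[_ du _]|_].
  exact: d_refl.
by case: excluded_middle_informative.
Qed.

Lemma glue_dist_bounds u v : 0 <= glue_dist u v <= M u.1 + M v.1.
Proof.
have := M_gt0 u.1; have := M_gt0 v.1; rewrite /glue_dist.
case: excluded_middle_informative => /= [[e du dv]|_]; last first.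
  by case: excluded_middle_informative => /= _; lra.
rewrite -e in dv; have := d_ge0 du dv; have := d_le_M du dv; lra.
Qed.

Lemma glue_dist_semimetric : semimetric (S * P) glue_dist.
Proof.
split; [|split].
- by move=> u v; case: (glue_dist_bounds u v).
- move=> [s p] [s' q]; split=> [|->]; last exact: glue_dist_self.
  case: (excluded_middle_informative (linked (s, p) (s', q))) => [l|nl].
    rewrite glue_dist_linked //; case: l => /= <- dp dq /(d_eq0 dp dq) -> //.
  case: (excluded_middle_informative ((s, p) = (s', q))) => // ne.
  rewrite glue_dist_far // => sum0; have := M_gt0 s; have := M_gt0 s'.
  by rewrite /= in sum0; lra.
- move=> u v; case: (excluded_middle_informative (linked u v)) => [l|nl].
    rewrite !glue_dist_linked //; last exact: linked_sym.
    by case: l => e du dv; rewrite d_sym // e.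
  case: (excluded_middle_informative (u = v)) => [->|ne]; first by [].
  rewrite !glue_dist_far //; first lra.
  - by move/linked_sym.
  - by move/esym.
Qed.

Lemma glue_dist_relaxed : relaxed_tri K (S * P) glue_dist.
Proof.
move=> u v w.
have [uv_ge0 _] := glue_dist_bounds u v; have [vw_ge0 _] := glue_dist_bounds v w.
have [uw_ge0 uw_le] := glue_dist_bounds u w.
case: (excluded_middle_informative (u = v)) => [uv|nuv].
  by subst v; rewrite glue_dist_self; nra.
case: (excluded_middle_informative (v = w)) => [vw|nvw].
  by subst w; rewrite glue_dist_self; nra.
have Mv_gt0 := M_gt0 v.1.
case: (excluded_middle_informative (linked u v)) => [luv|nluv];
case: (excluded_middle_informative (linked v w)) => [lvw|nlvw].
- have luw := linked_trans luv lvw.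
  rewrite !glue_dist_linked //; case: luv lvw => e du dv [e' _ dw].
  by rewrite e in du *; rewrite -e' in dw; apply: d_relaxed.
- by case: luv => e _ _; rewrite (glue_dist_far nlvw nvw) -e; nra.
- by case: lvw => e _ _; rewrite (glue_dist_far nluv nuv) e; nra.
- by rewrite (glue_dist_far nluv nuv) (glue_dist_far nlvw nvw); nra.
Qed.

Lemma glue_dist_condB : condB K (S * P) glue_dist.
Proof. by split; [exact: glue_dist_semimetric | exact: glue_dist_relaxed]. Qed.

End Glue.

Record triangle := Triangle { txy : R; tyz : R; txz : R }.

Record bK_triangle (K : R) (t : triangle) : Prop := BKTriangle {
  txy_ge0 : 0 <= txy t;
  tyz_ge0 : 0 <= tyz t;
  txz_ge0 : 0 <= txz t;
  txy_relaxed : txy t <= K * (tyz t + txz t);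
  tyz_relaxed : tyz t <= K * (txy t + txz t);
  txz_relaxed : txz t <= K * (txy t + tyz t);
  txy_eq0 : txy t = 0 -> tyz t = txz t;
  tyz_eq0 : tyz t = 0 -> txy t = txz t;
  txz_eq0 : txz t = 0 -> txy t = tyz t }.

Lemma condB_triangle (K : R) (X : Type) (d : X -> X -> R) (x y z : X) :
  condB K X d -> bK_triangle K (Triangle (d x y) (d y z) (d x z)).
Proof.
move=> [[d_ge0 [d_eq0 d_sym]] d_tri]; have := d_tri x z y; have := d_tri y x z.
have := d_tri x y z; rewrite (d_sym z y) (d_sym y x) => tri_xz tri_yz tri_xy.
split=> /=; try lra; try exact: d_ge0.
- by move=> /d_eq0 ->.
- by move=> /d_eq0 ->.
- by move=> /d_eq0 ->; apply: d_sym.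
Qed.

(* Vertices 0, 1, 2 stand for x, y, z. *)
Definition tside (t : triangle) (j k : nat) : R :=
  match j, k with
  | 0, 1 | 1, 0 => txy t
  | 1, 2 | 2, 1 => tyz t
  | 0, 2 | 2, 0 => txz t
  | _, _ => 0
  end.

(* A side of length 0 means that two vertices coincide; only one label is kept
   for them, so that distinct labels are at positive distance. *)
Definition label_ok (t : triangle) (j : nat) : Prop :=
  [\/ j = 0%nat, j = 1%nat /\ txy t <> 0 | [/\ j = 2%nat, tyz t <> 0 & txz t <> 0]].

Definition label_y (t : triangle) : nat :=
  if Req_dec_T (txy t) 0 then 0%nat else 1%nat.

Definition label_z (t : triangle) : nat :=
  if Req_dec_T (txz t) 0 then 0%nat else if Req_dec_T (tyz t) 0 then 1%nat else 2%nat.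

Section Triangle.

Variables (K : R) (t : triangle).
Hypothesis K_ge1 : 1 <= K.
Hypothesis t_bK : bK_triangle K t.

Lemma label_ok_012 j : label_ok t j -> [\/ j = 0%nat, j = 1%nat | j = 2%nat].
Proof. by case=> [-> | [-> _] | [-> _ _]]; constructor. Qed.

Lemma tside_ge0 j k : 0 <= tside t j k.
Proof.
case: t_bK => *.
by case: j => [|[|[|j]]]; case: k => [|[|[|k]]] /=; lra.
Qed.

Lemma tside_refl j : tside t j j = 0.
Proof. by case: j => [|[|[|j]]]. Qed.

Lemma tside_sym j k : tside t j k = tside t k j.
Proof. by case: j => [|[|[|j]]]; case: k => [|[|[|k]]]. Qed.

Lemma tside_le j k :
  tside t j k <= 1 + Rabs (txy t) + Rabs (tyz t) + Rabs (txz t).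
Proof.
case: t_bK => *; rewrite !Rabs_pos_eq //.
by case: j => [|[|[|j]]]; case: k => [|[|[|k]]] /=; lra.
Qed.

Lemma tside_eq0 j k : label_ok t j -> label_ok t k -> tside t j k = 0 -> j = k.
Proof.
by case=> [-> | [-> ?] | [-> ? ?]] [-> | [-> ?] | [-> ? ?]].
Qed.

Lemma tside_relaxed j k l : label_ok t j -> label_ok t k -> label_ok t l ->
  tside t j l <= K * (tside t j k + tside t k l).
Proof.
move=> /label_ok_012 [] -> /label_ok_012 [] -> /label_ok_012 [] -> /=.
all: by case: t_bK => *; nra.
Qed.

Lemma labels_realize :
  [/\ label_ok t (label_y t), label_ok t (label_z t),
      tside t 0 (label_y t) = txy t, tside t (label_y t) (label_z t) = tyz t
    & tside t 0 (label_z t) = txz t].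
Proof.
case: t_bK => _ _ _ _ _ _ exy eyz exz; rewrite /label_y /label_z /label_ok.
case: Req_dec_T => [xy0|xy]; case: Req_dec_T => [xz0|xz]; case: Req_dec_T => [yz0|yz].
all: try move: (exy xy0); try move: (eyz yz0); try move: (exz xz0); intros.
all: split=> /=; try lra.
all: solve [by constructor 1 | by constructor 2 | by constructor 3 | by case: xz; lra].
Qed.

End Triangle.

Definition universal_dist (K : R) : triangle * nat -> triangle * nat -> R :=
  glue_dist (fun t j => bK_triangle K t /\ label_ok t j) tside
    (fun t => 1 + Rabs (txy t) + Rabs (tyz t) + Rabs (txz t)).

Lemma universal_condB (K : R) : 1 <= K -> condB K (triangle * nat) (universal_dist K).
Proof.
move=> K_ge1; apply: glue_dist_condB => //.
- move=> t; have := Rabs_pos (txy t); have := Rabs_pos (tyz t).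
  by have := Rabs_pos (txz t); lra.
- by move=> t j k [bK _] _; exact: (tside_ge0 bK).
- by move=> t j k [bK _] _; exact: (tside_le bK).
- by move=> t j _; apply: tside_refl.
- by move=> t j k [_ okj] [_ okk]; apply: tside_eq0.
- by move=> t j k _ _; apply: tside_sym.
- by move=> t j k l [bK okj] [_ okk] [_ okl]; apply: tside_relaxed.
Qed.

Lemma universal_realizes (K : R) (t : triangle) : bK_triangle K t ->
  [/\ universal_dist K (t, 0%nat) (t, label_y t) = txy t,
      universal_dist K (t, label_y t) (t, label_z t) = tyz t
    & universal_dist K (t, 0%nat) (t, label_z t) = txz t].
Proof.
move=> bK; have [oky okz exy eyz exz] := labels_realize bK.
have ok0 : label_ok t 0 by constructor 1.
by rewrite /universal_dist !glue_dist_linked.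
Qed.

Theorem corollary3p1 (n : nat) (F : ('I_n -> R) -> R)
  (HF : forall v : 'I_n -> R, (forall i, 0 <= v i) -> 0 <= F v) :
  P_B n F ->
  forall Ks : 'I_n -> R, (forall i, 1 <= Ks i) ->
  exists K : R, 1 <= K /\ P_BKs_BK n F Ks K.
Proof.
move=> HPB Ks Ks_ge1.
have [_ [K [K_ge1 universal_tri]]] := HPB _ (fun i => universal_dist (Ks i))
  (fun i => condB_bmetric (Ks_ge1 i) (universal_condB (Ks_ge1 i))).
exists K; split=> // X d d_condB; split.
  by apply: prodD_semimetric => // [|i]; [exact: P_B_eq0 | case: (d_condB i)].
apply: prodD_relaxed_tri_transfer universal_tri => x y z.
pose t i := Triangle (d i (x i) (y i)) (d i (y i) (z i)) (d i (x i) (z i)).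
exists (fun i => (t i, 0%nat)), (fun i => (t i, label_y (t i))), (fun i => (t i, label_z (t i))).
by move=> i; apply: universal_realizes; apply: condB_triangle.
Qed.
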